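(* Let $G$ be a connected planar trivalent graph. Then $T_G(1)$ equals the number of Tait colorings of $G$, where $$T_G(z)=\sum_{M}\langle G:M\rangle_2(z),$$ the sum being over all perfect matchings $M$ of $G$.
   Context: Graphs are finite and may have multiple edges; trivalent means every vertex has degree $3$. A Tait coloring of $G$ is an assignment of one of three fixed colors to each edge so that the three edges at every vertex receive three distinct colors. The $2$-factor polynomial $\langle G:M\rangle_2(z)\in\mathbb{Z}[z,z^{-1}]$ of $G$ with perfect matching $M$ is defined as follows. Embed $G$ in the $2$-sphere. For a matching edge $e=uv$, let $\alpha,\beta$ be the other two edge-ends at $u$ and $\gamma,\delta$ the other two at $v$, labelled so that in a small disk around $e$ they appear in cyclic order $\alpha,\beta,\delta,\gamma$. The $0$-resolution at $e$ deletes $e,u,v$ and joins $\alpha$ to $\gamma$ and $\beta$ to $\delta$ by disjoint arcs; the $1$-resolution joins $\alpha$ to $\delta$ and $\beta$ to $\gamma$ by two arcs crossing once. For a state $s:M\to\{0,1\}$, resolving every matching edge accordingly yields $c(s)$ immersed closed curves, and $\langle G:M\rangle_2(z)=\sum_s(-z)^{|s|}(z+z^{-1})^{c(s)}$, where $|s|$ is the number of edges assigned $1$. This is independent of the chosen embedding. *)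

From mathcomp Require Import all_boot all_order all_algebra.
Set Implicit Arguments. Unset Strict Implicit. Unset Printing Implicit Defensive.
Import GRing.Theory.

(* Graphs embedded in the sphere are encoded as combinatorial maps
   (rotation systems) on a finite set of darts (half-edges) [D]:
   - [alpha] : fixed-point-free involution pairing the two darts of an edge;
   - [sigma] : rotation, cyclically permuting the darts at each vertex.
   Multiple edges and loops are allowed. *)

Section Maps.
Variable D : finType.

Definition ncomp (r : rel D) (A : {set D}) : nat :=
  #|[set [set y | connect r x y] | x in A]|.

Definition trivalent_map (alpha sigma : D -> D) : Prop :=
  (forall d, alpha (alpha d) = d) /\ (forall d, alpha d != d) /\
  (forall d, sigma (sigma (sigma d)) = d) /\ (forall d, sigma d != d).

Definition map_connected (alpha sigma : D -> D) : Prop :=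
  forall x y, connect (fun u v => (v == alpha u) || (v == sigma u)) x y.

Definition nvertices (sigma : D -> D) := ncomp (frel sigma) setT.
Definition nedges (alpha : D -> D) := ncomp (frel alpha) setT.
Definition nfaces (alpha sigma : D -> D) := ncomp (frel (sigma \o alpha)) setT.

Definition planar_map (alpha sigma : D -> D) : Prop :=
  nvertices sigma + nfaces alpha sigma = nedges alpha + 2.

(* perfect matching, as the set of darts of its edges *)
Definition perfect_matching (alpha sigma : D -> D) (M : {set D}) : bool :=
  [forall d, (d \in M) == (alpha d \in M)] &&
  [forall d, #|[set d; sigma d; sigma (sigma d)] :&: M| == 1].

(* a state s : M -> {0,1} is encoded by S = darts of the edges assigned 1 *)
Definition state (alpha : D -> D) (M S : {set D}) : bool :=
  (S \subset M) && [forall d, (d \in S) == (alpha d \in S)].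

(* For a non-matching dart d, the dart joined to it by the arc produced by
   the resolution of the matching edge at d's vertex.  With m the matching
   dart at the vertex and b = alpha m, the 0-resolution joins
   sigma m -- sigma^2 b and sigma^2 m -- sigma b (the two arcs not crossing),
   the 1-resolution joins sigma m -- sigma b and sigma^2 m -- sigma^2 b. *)
Definition res_partner (alpha sigma : D -> D) (S : {set D}) (M : {set D}) (d : D) : D :=
  if sigma d \in M then
    let m := sigma d in let b := alpha m in
    if m \in S then sigma (sigma b) else sigma b
  else
    let m := sigma (sigma d) in let b := alpha m in
    if m \in S then sigma b else sigma (sigma b).

Definition curve_rel (alpha sigma : D -> D) (M S : {set D}) : rel D :=
  fun d e => [&& d \notin M, e \notin M &
               (e == alpha d) || (e == res_partner alpha sigma S M d)].

Definition ncurves (alpha sigma : D -> D) (M S : {set D}) : nat :=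
  ncomp (curve_rel alpha sigma M S) (~: M).

(* <G:M>_2 evaluated at an invertible z of a commutative unit ring:
   sum_s (-z)^|s| (z + z^-1)^c(s) *)
Definition bracket2 (R : comUnitRingType) (alpha sigma : D -> D) (M : {set D})
  (z : R) : R :=
  \sum_(S : {set D} | state alpha M S)
     (- z) ^+ (#|S| %/ 2) * (z + z^-1) ^+ ncurves alpha sigma M S.

Definition T_poly (R : comUnitRingType) (alpha sigma : D -> D) (z : R) : R :=
  \sum_(M : {set D} | perfect_matching alpha sigma M) bracket2 alpha sigma M z.

(* Tait colouring, as a colouring of darts constant on edges *)
Definition tait_coloring (alpha sigma : D -> D) (c : {ffun D -> 'I_3}) : bool :=
  [forall d, (c (alpha d) == c d) &&
     [&& c d != c (sigma d), c (sigma d) != c (sigma (sigma d)) &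
         c d != c (sigma (sigma d))]].

Definition n_tait (alpha sigma : D -> D) : nat :=
  #|[set c : {ffun D -> 'I_3} | tait_coloring alpha sigma c]|.

End Maps.

(* At z = 1 a state contributes (-1)^(number of crossing resolutions) times
   2^(number of curves), and 2^(number of curves) counts the boolean labelings of
   the non-matching edges that are constant along every curve.  Exchanging the two
   sums, each such labeling x contributes the signed number of states it is
   compatible with.  If x is constant on the four edge-ends around some matching
   edge, toggling that edge is a sign-reversing involution and x contributes 0.
   Otherwise the two non-matching edges at every vertex carry different labels, so
   M and x form a Tait colouring, and x is compatible with exactly one state.  In a
   connected planar map the edges of colours 0 and 2 form an even subgraph, which
   by Euler's formula (a dimension count over GF(2)) is the boundary of a set of
   faces; a parity count along that boundary shows that the state has an even
   number of crossings, so each Tait colouring contributes 1. *)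

From mathcomp Require Import all_boot all_order all_algebra.
From mathcomp Require Import zify.
Import GRing.Theory Num.Theory.
Set Implicit Arguments. Unset Strict Implicit. Unset Printing Implicit Defensive.

Section Labelings.
Variable D : finType.
Local Notation labeling := {ffun D -> bool}.

Definition labelings (r : rel D) (A : {set D}) : {set labeling} :=
  [set f : labeling | [forall x, forall y, r x y ==> (f x == f y)] &&
                      [forall x, (x \notin A) ==> ~~ f x]].

Lemma labelingsP (r : rel D) (A : {set D}) (f : labeling) :
  reflect ((forall x y, r x y -> f x = f y) /\ (forall x, x \notin A -> f x = false))
          (f \in labelings r A).
Proof.
rewrite inE; apply: (iffP andP) => [[/forallP rf /forallP Af] | [rf Af]]; split.
- by move=> x y rxy; apply/eqP; have /forallP/(_ y)/implyP := rf x; apply.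
- by move=> x xA; apply/negbTE; have /implyP := Af x; apply.
- by apply/forallP => x; apply/forallP => y; apply/implyP => /rf ->.
- by apply/forallP => x; apply/implyP => /Af ->.
Qed.

Lemma labelings_connect (r : rel D) (A : {set D}) (f : labeling) x y :
  f \in labelings r A -> connect r x y -> f x = f y.
Proof.
move=> /labelingsP [rf _] /connectP [p rp ->] {y}.
by elim: p x rp => //= z p IHp x /andP [/rf -> /IHp].
Qed.

Lemma card_labelings (r : rel D) (A : {set D}) :
  connect_sym r -> (forall x y, r x y -> x \in A) ->
  #|labelings r A| = 2 ^ ncomp r A.
Proof.
move=> rsym rA; pose cls x := [set y | connect r x y].
pose C := cls @: A; pose lab (P : {set {set D}}) : labeling := [ffun x => cls x \in P].
have clsE x y : connect r x y -> cls x = cls y.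
  by move=> rxy; apply/setP => z; rewrite !inE; apply/idP/idP; apply: connect_trans;
    rewrite // rsym.
have clsC x : (cls x \in C) = (x \in A).
  apply/imsetP/idP => [[a aA clsax] | xA]; last by exists x.
  have: x \in cls a by rewrite -clsax inE connect0.
  rewrite inE rsym.
  by case/connectP=> [[_ /= <- //|y p /= /andP [/rA]]].
have labE : labelings r A = lab @: powerset C.
  apply/setP => f; apply/idP/imsetP => [fA | [P] /[!powersetE] /subsetP PC ->].
    exists [set cls x | x in A & f x].
      by rewrite powersetE; apply/subsetP=> _ /imsetP [x /[!inE] /andP [xA _] ->]; apply: imset_f.
    apply/ffunP => x; rewrite ffunE; apply/idP/imsetP => [fx | [a /[!inE] /andP [_ fa] clsxa]].
      exists x => //; rewrite inE fx andbT; apply: contraLR fx => xA.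
      by case/labelingsP: fA => _ ->.
    have: x \in cls a by rewrite -clsxa inE connect0.
    by rewrite inE => /(labelings_connect fA) <-.
  apply/labelingsP; split=> [x y /connect1/clsE | x]; rewrite !ffunE; first by move->.
  by rewrite -clsC; apply: contraNF; apply: PC.
rewrite labE card_in_imset ?card_powerset // => P Q /[!powersetE] /subsetP PC /subsetP QC labPQ.
apply/setP => S; case SC: (S \in C); last by rewrite (contraFF (PC S)) ?(contraFF (QC S)).
by case/imsetP: SC => x _ ->; move/ffunP/(_ x): labPQ; rewrite !ffunE.
Qed.

Definition xorl (f g : labeling) : labeling := [ffun d => f d (+) g d].
Definition zerol : labeling := [ffun=> false].

Lemma xorlA : associative xorl.
Proof. by move=> f g h; apply/ffunP => d; rewrite !ffunE addbA. Qed.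

Lemma xorKl f : cancel (xorl f) (xorl f).
Proof. by move=> g; apply/ffunP => d; rewrite !ffunE addKb. Qed.

Lemma xorl0 : right_id zerol xorl.
Proof. by move=> f; apply/ffunP => d; rewrite !ffunE addbF. Qed.

Lemma xorll f : xorl f f = zerol.
Proof. by apply/ffunP => d; rewrite !ffunE addbb. Qed.

Lemma card_by_kernel (A : {set labeling}) (h : labeling -> labeling) :
  {in A &, forall f g, xorl f g \in A} -> {in A &, {morph h : f g / xorl f g}} ->
  #|A| = #|h @: A| * #|[set f in A | h f == zerol]|.
Proof.
move=> Axor hxor; rewrite -sum1_card (partition_big_imset h) -sum_nat_const.
apply: eq_bigr => _ /imsetP [f fA ->]; rewrite sum1dep_card.
have -> : [set g | (g \in A) && (h g == h f)] = xorl f @: [set g in A | h g == zerol].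
  apply/setP => g; rewrite inE.
  apply/andP/imsetP => [[gA /eqP hg] | [k /[!inE] /andP [kA /eqP hk] ->]].
    by exists (xorl f g); rewrite ?xorKl // inE Axor // hxor // hg xorll eqxx.
  by rewrite Axor // hxor // hk xorl0.
by rewrite card_imset //; apply: can_inj (xorKl f).
Qed.

Lemma big_xorl_apply (P : pred D) (F : D -> labeling) e :
  (\big[xorl/zerol]_(d | P d) F d) e = \big[addb/false]_(d | P d) F d e.
Proof. by apply: (big_morph (fun f : labeling => f e)) => [f g|]; rewrite ffunE. Qed.

Definition parity (f : labeling) : bool := \big[addb/false]_d f d.

Lemma parity_xor f g : parity (xorl f g) = parity f (+) parity g.
Proof. by rewrite /parity -big_split; apply: eq_bigr => d _; rewrite ffunE. Qed.

Lemma big_addb_eq (P : pred D) e : \big[addb/false]_(d | P d) (e == d) = P e.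
Proof.
case Pe: (P e); last by rewrite big1 // => d; apply: contraTF => /eqP <-; rewrite Pe.
by rewrite (bigD1 e) //= eqxx big1 // => d /andP [_]; rewrite eq_sym => /negbTE.
Qed.

Lemma big_addb_const (P : pred D) b :
  \big[addb/false]_(d | P d) b = (\big[addb/false]_d P d) && b.
Proof.
rewrite (big_morph (fun c => c && b) (fun c c' => andb_addl c c' b) (erefl (false && b))).
by rewrite big_mkcond; apply: eq_bigr => d _; case: (P d).
Qed.

End Labelings.

Arguments xorl {D}.
Arguments zerol {D}.

Section Involution.
Variables (D : finType) (alpha : D -> D).
Hypotheses (alphaK : involutive alpha) (alpha_neq : forall d, alpha d != d).

Lemma even_sum_involution (A : {set D}) (f : D -> nat) :
  (forall d, d \in A -> alpha d \in A) -> (forall d, d \in A -> f (alpha d) = f d) ->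
  ~~ odd (\sum_(d in A) f d).
Proof.
move=> Aalpha fE; pose lo d := (enum_rank d < enum_rank (alpha d))%N.
rewrite (bigID lo) /= [X in (_ + X)%N](reindex_inj (inv_inj alphaK)) /=.
rewrite [X in (_ + X)%N](eq_big (fun d => (d \in A) && lo d) f) ?addnn ?odd_double //.
  move=> d; rewrite /lo alphaK -leqNgt leq_eqVlt (inj_eq val_inj) (inj_eq enum_rank_inj).
  rewrite eq_sym (negbTE (alpha_neq d)).
  by apply/andP/andP => -[/Aalpha]; rewrite ?alphaK.
by move=> d /andP [dA _]; rewrite -(fE _ dA) alphaK.
Qed.

Lemma odd_half_card_jumps (A : {set D}) (g : D -> bool) :
  (forall d, d \in A -> alpha d \in A) ->
  odd (#|[set d in A | g d != g (alpha d)]| %/ 2) = odd (\sum_(d in A) g d).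
Proof.
move=> Aalpha; set n := (\sum_(d in A) g d).
have jumpsE : #|[set d in A | g d != g (alpha d)]| = \sum_(d in A) (g d (+) g (alpha d)).
  rewrite -sum1_card big_mkcond [RHS]big_mkcond; apply: eq_bigr => d _.
  by rewrite inE; case: (d \in A); case: (g d); case: (g (alpha d)).
have alphaE : \sum_(d in A) g (alpha d) = n.
  rewrite (reindex_inj (inv_inj alphaK)) /=; apply: eq_big => d; rewrite ?alphaK //.
  by apply/idP/idP => /Aalpha; rewrite ?alphaK.
have even_meet : ~~ odd (\sum_(d in A) (g d * g (alpha d))).
  by apply: even_sum_involution => // d _; rewrite alphaK mulnC.
have : (\sum_(d in A) (g d (+) g (alpha d)) + 2 * \sum_(d in A) (g d * g (alpha d)) = 2 * n)%N.
  rewrite big_distrr -big_split mul2n -addnn -{2}alphaE -big_split.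
  by apply: eq_bigr => d _; case: (g d); case: (g (alpha d)).
rewrite -jumpsE; move: even_meet; set k := \sum_(d in A) _ => /negbTE even_k sumE.
have halfE : (#|[set d in A | g d != g (alpha d)]| %/ 2 + k = n)%N by lia.
by rewrite -halfE oddD even_k addbF.
Qed.

End Involution.

Section TrivalentMap.
Variables (D : finType) (alpha sigma : D -> D).
Hypotheses (alphaK : involutive alpha) (sigma3 : forall d, sigma (sigma (sigma d)) = d).
Hypothesis sigma_neq : forall d, sigma d != d.
Local Notation labeling := {ffun D -> bool}.

Lemma sigma_inj : injective sigma.
Proof. by apply: (can_inj (g := sigma \o sigma)) => d /=; rewrite sigma3. Qed.

Lemma uniq_vertex d : uniq [:: d; sigma d; sigma (sigma d)].
Proof.
have sigma2_neq : sigma (sigma d) != d.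
  by apply: contra_neq (sigma_neq d) => sigma2d; rewrite -[RHS]sigma3 sigma2d.
rewrite /= !inE !negb_or ![_ == sigma (sigma d)]eq_sym ![d == _]eq_sym.
by rewrite sigma2_neq sigma_neq (inj_eq sigma_inj) sigma_neq.
Qed.

Definition inv_labelings (p : D -> D) : {set labeling} :=
  [set f : labeling | [forall d, f (p d) == f d]].

Lemma inv_labelingsP p (f : labeling) :
  reflect (forall d, f (p d) = f d) (f \in inv_labelings p).
Proof. by rewrite inE; apply: (iffP forallP) => fp d; apply/eqP. Qed.

Lemma card_inv_labelings p : injective p -> #|inv_labelings p| = 2 ^ ncomp (frel p) setT.
Proof.
move=> p_inj; rewrite -card_labelings ?inE //; last exact: fconnect_sym.
congr #|pred_of_set _|; apply/setP => f.
apply/inv_labelingsP/labelingsP => [fp | [fp _] d]; last by rewrite (fp d (p d)) /=.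
by split=> [x _ /eqP <- // | x]; rewrite inE.
Qed.

Lemma inv_labelings_xor p : {in inv_labelings p &, forall f g, xorl f g \in inv_labelings p}.
Proof.
move=> f g /inv_labelingsP fp /inv_labelingsP gp.
by apply/inv_labelingsP => d; rewrite !ffunE fp gp.
Qed.

Lemma inv_labelings0 p : zerol \in inv_labelings p.
Proof. by apply/inv_labelingsP => d; rewrite !ffunE. Qed.

Definition face_labelings := inv_labelings (sigma \o alpha).
Definition edge_labelings := inv_labelings alpha.
Definition vertex_labelings := inv_labelings sigma.

Definition region_boundary (c : labeling) : labeling := [ffun d => c d (+) c (alpha d)].
Definition odd_vertices (w : labeling) : labeling :=
  [ffun d => w d (+) w (sigma d) (+) w (sigma (sigma d))].
Definition even_subgraphs := [set w in edge_labelings | odd_vertices w == zerol].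

Lemma region_boundary_xor : {morph region_boundary : c c' / xorl c c'}.
Proof. by move=> c c'; apply/ffunP => d; rewrite !ffunE addbACA. Qed.

Lemma odd_vertices_xor : {morph odd_vertices : w w' / xorl w w'}.
Proof.
move=> w w'; apply/ffunP => d; rewrite !ffunE.
by case: (w d); case: (w' d); case: (w (sigma d)); case: (w' (sigma d)); case: (w _); case: (w' _).
Qed.

Lemma odd_vertices0 : odd_vertices zerol = zerol.
Proof. by apply/ffunP => d; rewrite !ffunE. Qed.

(* The faces of d, sigma d, sigma^2 d are those of alpha (sigma^2 d), alpha d, alpha (sigma d):
   the three edges at a vertex separate its three faces cyclically. *)
Lemma region_boundary_even c : c \in face_labelings -> region_boundary c \in even_subgraphs.
Proof.
move=> /inv_labelingsP /= cE; rewrite inE; apply/andP; split.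
  by apply/inv_labelingsP => d; rewrite !ffunE alphaK addbC.
apply/eqP/ffunP => d; rewrite !ffunE -[c (alpha d)]cE -[c (alpha (sigma d))]cE.
by rewrite -[c (alpha (sigma (sigma d)))]cE !alphaK sigma3; case: (c d); case: (c (sigma d));
  case: (c (sigma (sigma d))).
Qed.

Definition vertex_ind u : labeling :=
  [ffun d => (d == u) (+) (sigma d == u) (+) (sigma (sigma d) == u)].
Definition edge_ind u : labeling := [ffun d => (d == u) (+) (d == alpha u)].

Lemma vertex_ind_sigma u : vertex_ind (sigma u) = vertex_ind u.
Proof.
apply/ffunP => d; rewrite !ffunE !(inj_eq sigma_inj) -{1}[d]sigma3 (inj_eq sigma_inj).
by case: (d == u); case: (sigma d == u); case: (sigma (sigma d) == u).
Qed.

Lemma vertex_ind_vertex u : vertex_ind u \in vertex_labelings.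
Proof.
apply/inv_labelingsP => d; rewrite !ffunE sigma3.
by case: (d == u); case: (sigma d == u); case: (sigma (sigma d) == u).
Qed.

Lemma odd_vertices_edge_ind u :
  odd_vertices (edge_ind u) = xorl (vertex_ind u) (vertex_ind (alpha u)).
Proof.
apply/ffunP => d; rewrite !ffunE.
by case: (d == u); case: (d == alpha u); case: (sigma d == u); case: (sigma d == alpha u);
  case: (sigma (sigma d) == u); case: (sigma (sigma d) == alpha u).
Qed.

Lemma edge_ind_edge u : edge_ind u \in edge_labelings.
Proof.
apply/inv_labelingsP => d; rewrite !ffunE (inj_eq (inv_inj alphaK)) -{1}[u]alphaK.
by rewrite (inj_eq (inv_inj alphaK)) addbC.
Qed.

Lemma parity_vertex_ind u : parity (vertex_ind u).
Proof.
have sigmaE d : (sigma d == u) = (sigma (sigma u) == d).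
  by rewrite -{1}(sigma3 u) (inj_eq sigma_inj) eq_sym.
have sigma2E d : (sigma (sigma d) == u) = (sigma u == d).
  by rewrite -{1}(sigma3 u) !(inj_eq sigma_inj) eq_sym.
rewrite /parity; under eq_bigr do rewrite ffunE sigmaE sigma2E eq_sym.
by rewrite !big_split /= !big_addb_eq.
Qed.

Lemma planar_map_nonempty : planar_map alpha sigma -> [set: D] != set0.
Proof.
move=> euler; apply/eqP => D0; move: euler.
by rewrite /planar_map /nvertices /nfaces /nedges /ncomp D0 !imset0 !cards0.
Qed.

Section Connected.
Hypothesis connected : map_connected alpha sigma.

Lemma connected_const (f : labeling) :
  (forall d, f (alpha d) = f d) -> (forall d, f (sigma d) = f d) -> forall x y, f x = f y.
Proof.
move=> fa fs x y; have /connectP [p xp ->] := connected x y.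
by elim: p x xp => //= z p IHp x /andP [/orP [] /eqP -> /IHp <-].
Qed.

Lemma odd_vertices_pair u v :
  exists2 w, w \in edge_labelings & odd_vertices w = xorl (vertex_ind u) (vertex_ind v).
Proof.
have /connectP [p up ->] := connected u v.
elim: p u up => [|z p IHp] u /=.
  by exists zerol; rewrite ?inv_labelings0 ?odd_vertices0 ?xorll.
case/andP=> /orP [] /eqP -> /IHp [w wE wb]; last by exists w; rewrite ?wb ?vertex_ind_sigma.
exists (xorl (edge_ind u) w); first by rewrite inv_labelings_xor ?edge_ind_edge.
by rewrite odd_vertices_xor odd_vertices_edge_ind wb -xorlA xorKl.
Qed.

Section Rooted.
Variable d0 : D.

Lemma card_region_boundary_kernel :
  #|[set c in face_labelings | region_boundary c == zerol]| = 2.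
Proof.
have -> : [set c in face_labelings | region_boundary c == zerol] = [set zerol; [ffun=> true]].
  apply/setP => c; rewrite in_set2 in_set.
  apply/andP/idP => [[/inv_labelingsP /= cf /eqP /ffunP cb] | ].
    have ca d : c (alpha d) = c d by have := cb d; rewrite !ffunE; case: (c d); case: (c (alpha d)).
    have cs d : c (sigma d) = c d by have := cf (alpha d); rewrite /= alphaK ca.
    apply/orP; case c0: (c d0); [right | left]; apply/eqP/ffunP => d;
      by rewrite !ffunE -c0 (connected_const ca cs d d0).
  case/orP=> /eqP ->; split; try by apply/eqP/ffunP => d; rewrite !ffunE.
    exact: inv_labelings0.
  by apply/inv_labelingsP => d; rewrite !ffunE.
by rewrite cards2; case: eqP => // /ffunP /(_ d0); rewrite !ffunE.
Qed.

Lemma vertex_labeling_even t :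
  t \in vertex_labelings -> ~~ parity t -> t \in odd_vertices @: edge_labelings.
Proof.
move=> /inv_labelingsP t_sigma /negbTE t_even; set B := odd_vertices @: edge_labelings.
have Bxor : {in B &, forall f g, xorl f g \in B}.
  move=> _ _ /imsetP [w wE ->] /imsetP [w' w'E ->].
  by rewrite -odd_vertices_xor imset_f ?inv_labelings_xor.
have B0 : zerol \in B by rewrite -odd_vertices0 imset_f ?inv_labelings0.
have pairB d : xorl (vertex_ind d0) (vertex_ind d) \in B.
  by have [w wE <-] := odd_vertices_pair d0 d; apply: imset_f.
(* A vertex has three darts, and the [vertex_ind d0] terms cancel since [t] is even. *)
suff -> : t = \big[xorl/zerol]_(d | t d) xorl (vertex_ind d0) (vertex_ind d).
  exact: (big_ind (fun f => f \in B)).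
apply/ffunP => e; rewrite big_xorl_apply.
under eq_bigr do rewrite !ffunE.
by rewrite !big_split /= !big_addb_const -/(parity t) t_even !big_addb_eq !t_sigma; case: (t e).
Qed.

Lemma card_vertex_labelings : #|vertex_labelings| <= 2 * #|odd_vertices @: edge_labelings|.
Proof.
set B := odd_vertices @: edge_labelings.
have sub : vertex_labelings \subset B :|: xorl (vertex_ind d0) @: B.
  apply/subsetP => t tV; rewrite inE; case tp: (parity t); last by rewrite vertex_labeling_even ?tp.
  apply/orP; right; rewrite -[t](xorKl (vertex_ind d0)) imset_f // vertex_labeling_even //.
    by rewrite inv_labelings_xor ?vertex_ind_vertex.
  by rewrite parity_xor parity_vertex_ind tp.
rewrite mul2n -addnn (leq_trans (subset_leq_card sub)) // (leq_trans (leq_card_setU _ _)) //.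
by rewrite leq_add2l leq_imset_card.
Qed.

End Rooted.

Hypothesis planar : planar_map alpha sigma.

Lemma even_subgraph_region_boundary : even_subgraphs \subset region_boundary @: face_labelings.
Proof.
have /set0Pn [d0 _] := planar_map_nonempty planar.
have boundary_even : region_boundary @: face_labelings \subset even_subgraphs.
  by apply/subsetP => _ /imsetP [c cF ->]; apply: region_boundary_even.
suff: #|even_subgraphs| <= #|region_boundary @: face_labelings|.
  by rewrite (geq_leqif (subset_leqif_card boundary_even)).
have faces := card_by_kernel (@inv_labelings_xor (sigma \o alpha))
  (fun c c' _ _ => region_boundary_xor c c').
have edges := card_by_kernel (@inv_labelings_xor alpha) (fun w w' _ _ => odd_vertices_xor w w').
have vertices := card_vertex_labelings d0.
rewrite -/face_labelings (card_region_boundary_kernel d0) card_inv_labelings in faces; last first.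
  by move=> x y /= /sigma_inj /(inv_inj alphaK).
rewrite -/edge_labelings card_inv_labelings in edges; last exact: inv_inj alphaK.
rewrite /vertex_labelings card_inv_labelings in vertices; last exact: sigma_inj.
move: planar; rewrite /planar_map /nvertices /nfaces /nedges => euler.
have {euler} : 2 ^ ncomp (frel sigma) setT * 2 ^ ncomp (frel (sigma \o alpha)) setT =
  2 ^ ncomp (frel alpha) setT * 4 by rewrite -expnD euler expnD.
rewrite faces edges -/even_subgraphs; nia.
Qed.

End Connected.
End TrivalentMap.

Lemma card_set3I (T : finType) (a b c : T) (A : {set T}) : uniq [:: a; b; c] ->
  #|[set a; b; c] :&: A| = ((a \in A) + (b \in A) + (c \in A))%N.
Proof.
move=> abc_uniq; have -> : #|[set a; b; c] :&: A| = \sum_(y in [:: a; b; c]) (y \in A).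
  rewrite -sum1_card big_mkcond [RHS]big_mkcond; apply: eq_bigr => y _.
  by rewrite !inE orbA; case: (_ || _); case: (y \in A).
by rewrite -big_uniq //= !big_cons big_nil addn0 addnA.
Qed.

Section Matching.
Variables (D : finType) (alpha sigma : D -> D).
Hypotheses (alphaK : involutive alpha) (alpha_neq : forall d, alpha d != d).
Hypotheses (sigma3 : forall d, sigma (sigma (sigma d)) = d) (sigma_neq : forall d, sigma d != d).
Variable M : {set D}.
Hypothesis M_perfect : perfect_matching alpha sigma M.
Local Notation labeling := {ffun D -> bool}.
Local Notation partner S := (res_partner alpha sigma S M).

Lemma matching_alpha d : (alpha d \in M) = (d \in M).
Proof. by case/andP: M_perfect => /forallP /(_ d) /eqP. Qed.

Lemma matching_vertex d : ((d \in M) + (sigma d \in M) + (sigma (sigma d) \in M) = 1)%N.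
Proof.
by case/andP: M_perfect => _ /forallP /(_ d) /eqP; rewrite card_set3I // uniq_vertex.
Qed.

Lemma matching_sigma m : m \in M -> (sigma m \notin M) && (sigma (sigma m) \notin M).
Proof. by have := matching_vertex m; case: (m \in M); case: (_ \in M); case: (_ \in M). Qed.

Lemma unmatched_vertex d : d \notin M -> (sigma d \in M) || (sigma (sigma d) \in M).
Proof. by have := matching_vertex d; case: (d \in M); case: (_ \in M); case: (_ \in M). Qed.

Lemma unmatched_ind (P : D -> Prop) :
  (forall m, m \in M -> P (sigma m)) -> (forall m, m \in M -> P (sigma (sigma m))) ->
  forall d, d \notin M -> P d.
Proof.
by move=> P1 P2 d /unmatched_vertex /orP [/P2 | /P1]; rewrite sigma3.
Qed.

Lemma res_partner_sigma S m : m \in M ->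
  partner S (sigma m) = if m \in S then sigma (alpha m) else sigma (sigma (alpha m)).
Proof.
by move=> mM; case/andP: (matching_sigma mM) => _ /negbTE mM2; rewrite /res_partner mM2 sigma3.
Qed.

Lemma res_partner_sigma2 S m : m \in M ->
  partner S (sigma (sigma m)) = if m \in S then sigma (sigma (alpha m)) else sigma (alpha m).
Proof. by move=> mM; rewrite /res_partner sigma3 mM. Qed.

Lemma res_partner_unmatched S d : d \notin M -> partner S d \notin M.
Proof.
move: d; apply: unmatched_ind => m mM; rewrite (res_partner_sigma2, res_partner_sigma) //.
all: have /andP [h1 h2] : (sigma (alpha m) \notin M) && (sigma (sigma (alpha m)) \notin M).
all: by [apply: matching_sigma; rewrite matching_alpha | case: (m \in S)].
Qed.

Lemma res_partnerK S d : state alpha M S -> d \notin M -> partner S (partner S d) = d.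
Proof.
case/andP=> _ /forallP S_alpha.
have SE m : (alpha m \in S) = (m \in S) by rewrite (eqP (S_alpha m)).
move: d; apply: unmatched_ind => m mM; have aM : alpha m \in M by rewrite matching_alpha.
  by rewrite res_partner_sigma //; case: ifP => mS;
    rewrite (res_partner_sigma2, res_partner_sigma) // SE mS alphaK.
by rewrite res_partner_sigma2 //; case: ifP => mS;
  rewrite (res_partner_sigma2, res_partner_sigma) // SE mS alphaK.
Qed.

Lemma curve_rel_sym S : state alpha M S -> connect_sym (curve_rel alpha sigma M S).
Proof.
move=> S_state; apply: sym_connect_sym => d e.
suff sym d' e' : curve_rel alpha sigma M S d' e' -> curve_rel alpha sigma M S e' d'.
  by apply/idP/idP; apply: sym.
case/and3P=> dM eM /orP [] /eqP eE; rewrite /curve_rel eM dM eE /=.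
  by rewrite alphaK eqxx.
by rewrite res_partnerK // eqxx orbT.
Qed.

Definition labels_unmatched (x : labeling) : bool :=
  [forall d, if d \in M then ~~ x d else x (alpha d) == x d].

(* [x] agrees at both ends of each of the two arcs replacing the edge of [m]. *)
Definition resolves (S : {set D}) (x : labeling) (m : D) : bool :=
  if m \in S then
    (x (sigma (alpha m)) == x (sigma m)) && (x (sigma (sigma (alpha m))) == x (sigma (sigma m)))
  else
    (x (sigma (sigma (alpha m))) == x (sigma m)) && (x (sigma (alpha m)) == x (sigma (sigma m))).

Definition compatible (S : {set D}) (x : labeling) : bool :=
  labels_unmatched x && [forall m in M, resolves S x m].

Lemma labels_unmatchedP (x : labeling) :
  reflect ((forall d, d \in M -> x d = false) /\ (forall d, d \notin M -> x (alpha d) = x d))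
          (labels_unmatched x).
Proof.
apply: (iffP forallP) => [x_un | [x0 xa] d].
  by split=> d dM; have := x_un d; rewrite ?dM ?(negbTE dM) => /eqP //; case: (x d).
by case: ifP => dM; [rewrite x0 | rewrite xa ?dM].
Qed.

Lemma labelings_curves S :
  state alpha M S -> labelings (curve_rel alpha sigma M S) (~: M) = [set x | compatible S x].
Proof.
move=> S_state; apply/setP => x; rewrite [in RHS]inE; apply/labelingsP/andP.
  case=> x_curve x_out; split.
    apply/labels_unmatchedP; split=> d dM; first by apply: x_out; rewrite inE dM.
    by apply/esym/x_curve; rewrite /curve_rel dM matching_alpha dM eqxx.
  have x_partner d : d \notin M -> x d = x (partner S d).
    by move=> dM; apply: x_curve; rewrite /curve_rel dM res_partner_unmatched // eqxx orbT.
  apply/forallP => m; apply/implyP => mM; case/andP: (matching_sigma mM) => m1 m2.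
  move: (x_partner _ m1) (x_partner _ m2).
  rewrite (res_partner_sigma2 _ mM) (res_partner_sigma _ mM) /resolves.
  by case: (m \in S) => -> ->; rewrite !eqxx.
case=> /labels_unmatchedP [x0 xa] /forallP x_res; split; last first.
  by move=> d; rewrite inE negbK; apply: x0.
move=> d e /and3P [dM _ /orP [] /eqP ->]; first by rewrite xa.
move: d dM; apply: unmatched_ind => m mM; move: (implyP (x_res m) mM).
all: rewrite (res_partner_sigma2 _ mM, res_partner_sigma _ mM) /resolves.
all: by case: (m \in S) => /andP [/eqP e1 /eqP e2]; rewrite ?e1 ?e2.
Qed.

Lemma card_compatible S :
  state alpha M S -> 2 ^ ncurves alpha sigma M S = #|[set x | compatible S x]|.
Proof.
move=> S_state; rewrite -labelings_curves // card_labelings //; first exact: curve_rel_sym.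
by move=> d e /and3P [dM _ _]; rewrite inE.
Qed.

Definition state_sign (S : {set D}) : int := ((-1) ^+ (#|S| %/ 2))%R.

(* Both resolutions of the edge of [m] are compatible with [x]. *)
Definition free (x : labeling) (m : D) : bool :=
  [&& m \in M, x (sigma m) == x (sigma (sigma m)),
      x (sigma (alpha m)) == x (sigma (sigma (alpha m))) & x (sigma m) == x (sigma (alpha m))].

Section Toggle.
Variables (x : labeling) (m0 : D).
Hypothesis m0_free : free x m0.

Let toggle (S : {set D}) := [set d | (d \in S) (+) (d \in [set m0; alpha m0])].

Let toggleE S d : (d \in toggle S) = (d \in S) (+) (d \in [set m0; alpha m0]).
Proof. exact: in_set. Qed.

Let toggleK : involutive toggle.
Proof. by move=> S; apply/setP => d; rewrite !toggleE addbK. Qed.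

Let edge0_alpha d : (alpha d \in [set m0; alpha m0]) = (d \in [set m0; alpha m0]).
Proof. by rewrite !inE -{1}[m0]alphaK !(inj_eq (inv_inj alphaK)) orbC. Qed.

Let edge0_matched d : d \in [set m0; alpha m0] -> d \in M.
Proof.
case/and4P: m0_free => m0M _ _ _.
by rewrite !inE => /orP [] /eqP ->; rewrite ?matching_alpha.
Qed.

Let state_toggle S : state alpha M (toggle S) = state alpha M S.
Proof.
suff toggleP T : state alpha M T -> state alpha M (toggle T).
  by apply/idP/idP => /toggleP; rewrite ?toggleK.
case/andP=> /subsetP TM /forallP T_alpha; apply/andP; split.
  by apply/subsetP => d; rewrite toggleE; case: (d \in T) (TM d) => [-> //|_ /= /edge0_matched].
by apply/forallP => d; rewrite !toggleE edge0_alpha (eqP (T_alpha d)).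
Qed.

Let resolves_toggle S m : resolves (toggle S) x m = resolves S x m.
Proof.
rewrite /resolves toggleE; case m_edge: (m \in [set m0; alpha m0]); rewrite ?addbF //.
case/and4P: m0_free => _ /eqP e1 /eqP e2 /eqP e3.
have [-> -> ->] : [/\ x (sigma (alpha m)) = x (sigma m), x (sigma (sigma m)) = x (sigma m) &
    x (sigma (sigma (alpha m))) = x (sigma m)].
  by move: m_edge; rewrite !inE => /orP [] /eqP ->; rewrite ?alphaK; split; congruence.
by rewrite eqxx; case: (m \in S).
Qed.

Let sign_toggle S : state alpha M S -> state_sign (toggle S) = (- state_sign S)%R.
Proof.
wlog m0S : S / m0 \notin S => [wlog_m0 S_state|].
  have [m0S|] := boolP (m0 \in S); last by move=> m0S; apply: wlog_m0.
  rewrite -{2}[S]toggleK (wlog_m0 (toggle S)) ?opprK ?state_toggle //.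
  by rewrite toggleE m0S !inE eqxx.
case/andP=> _ /forallP S_alpha.
have edge0S d : d \in [set m0; alpha m0] -> d \notin S.
  by rewrite !inE => /orP [] /eqP ->; rewrite -?(eqP (S_alpha m0)).
have -> : toggle S = [set m0; alpha m0] :|: S.
  apply/setP => d; rewrite toggleE [in RHS]in_setU.
  by case: (boolP (d \in [set m0; alpha m0])) => [/edge0S dS | _]; rewrite ?(negbTE dS) ?addbF.
rewrite /state_sign; have -> : #|[set m0; alpha m0] :|: S| = (#|S| + 2)%N.
  rewrite cardsU; have -> : [set m0; alpha m0] :&: S = set0.
    by apply/setP => d; rewrite inE in_set0; apply/andP => -[/edge0S /negP].
  by rewrite cards0 cards2 eq_sym alpha_neq subn0 addnC.
have -> : ((#|S| + 2) %/ 2 = (#|S| %/ 2).+1)%N by lia.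
by rewrite exprS mulN1r.
Qed.

Let compatible_toggle S : compatible (toggle S) x = compatible S x.
Proof. by rewrite /compatible; under eq_forallb do rewrite resolves_toggle. Qed.

Lemma sum_sign_free :
  (\sum_(S | state alpha M S) (if compatible S x then state_sign S else 0))%R = 0%R.
Proof.
set L := LHS; have : L = (- L)%R.
  rewrite {1}/L (reindex_inj (inv_inj toggleK)) /= -sumrN.
  apply: eq_big => [S | S]; rewrite state_toggle // => S_state.
  by rewrite compatible_toggle sign_toggle //; case: ifP; rewrite ?oppr0.
by move/eqP; rewrite eq_sym eqNr => /eqP.
Qed.

End Toggle.

Definition tait_labeling (x : labeling) : bool :=
  labels_unmatched x && [forall m in M, x (sigma m) != x (sigma (sigma m))].

Definition tait_state (x : labeling) : {set D} :=
  [set m in M | x (sigma m) != x (sigma (sigma (alpha m)))].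

Lemma tait_labelingP (x : labeling) :
  reflect [/\ forall d, d \in M -> x d = false, forall d, d \notin M -> x (alpha d) = x d
            & forall m, m \in M -> x (sigma m) != x (sigma (sigma m))]
          (tait_labeling x).
Proof.
apply: (iffP andP) => [[/labels_unmatchedP [x0 xa] /forallP x_split] | [x0 xa x_split]].
  by split=> // m; apply: implyP.
by split; [apply/labels_unmatchedP | apply/forallP => m; apply/implyP; apply: x_split].
Qed.

Lemma compatible_tait S x : state alpha M S -> compatible S x -> ~~ [exists m, free x m] ->
  tait_labeling x && (S == tait_state x).
Proof.
case/andP=> /subsetP SM _ /andP [x_un /forallP x_res] /existsPn x_nfree.
have x_split m : m \in M -> x (sigma m) != x (sigma (sigma m)).
  move=> mM; move: (implyP (x_res m) mM) (x_nfree m); rewrite /free /resolves mM /=.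
  by case: (m \in S); case: (x (sigma m)); case: (x (sigma (sigma m)));
    case: (x (sigma (alpha m))); case: (x (sigma (sigma (alpha m)))).
rewrite /tait_labeling x_un; apply/andP; split.
  by apply/forallP => m; apply/implyP; apply: x_split.
apply/eqP/setP => m; rewrite inE; case mM: (m \in M); last exact: contraFF (SM m) mM.
have aM : alpha m \in M by rewrite matching_alpha.
move: (implyP (x_res m) mM) (x_split _ aM); rewrite /resolves /=.
by case: (m \in S); case: (x (sigma m)); case: (x (sigma (sigma m)));
  case: (x (sigma (alpha m))); case: (x (sigma (sigma (alpha m)))).
Qed.

Lemma tait_compatible x :
  tait_labeling x -> state alpha M (tait_state x) && compatible (tait_state x) x.
Proof.
case/andP=> x_un /forallP x_split.
have x_splitM m : m \in M -> x (sigma m) != x (sigma (sigma m)).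
  by move=> mM; apply: (implyP (x_split m)).
rewrite /compatible /state x_un /= -andbA; apply/and3P; split.
- by apply/subsetP => m; rewrite inE => /andP [].
- apply/forallP => m; rewrite !inE matching_alpha alphaK; case mM: (m \in M) => //=.
  have aM : alpha m \in M by rewrite matching_alpha.
  by move: (x_splitM _ mM) (x_splitM _ aM); case: (x (sigma m)); case: (x (sigma (sigma m)));
    case: (x (sigma (alpha m))); case: (x (sigma (sigma (alpha m)))).
- apply/forallP => m; apply/implyP => mM; have aM : alpha m \in M by rewrite matching_alpha.
  rewrite /resolves inE mM /=.
  by move: (x_splitM _ mM) (x_splitM _ aM); case: (x (sigma m)); case: (x (sigma (sigma m)));
    case: (x (sigma (alpha m))); case: (x (sigma (sigma (alpha m)))).
Qed.

Lemma tait_not_free x : tait_labeling x -> ~~ [exists m, free x m].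
Proof.
case/andP=> _ /forallP x_split; apply/existsPn => m; rewrite /free.
by case mM: (m \in M) => //=; rewrite (negbTE (implyP (x_split m) mM)).
Qed.

Lemma sum_sign_compatible x :
  (\sum_(S | state alpha M S) (if compatible S x then state_sign S else 0))%R =
  if tait_labeling x then state_sign (tait_state x) else 0%R.
Proof.
have [/existsP [m0 m0_free] | x_nfree] := boolP [exists m, free x m].
  rewrite (sum_sign_free m0_free); case: ifP => // /tait_not_free.
  by apply: contraNeq => _; apply/existsP; exists m0.
case: ifP => [x_tait | x_ntait].
  case/andP: (tait_compatible x_tait) => st_x comp_x.
  rewrite (bigD1 (tait_state x)) //= comp_x big1 ?addr0 // => S /andP [S_state S_neq].
  case: ifP => // S_comp; case/andP: (compatible_tait S_state S_comp x_nfree) => _ S_eq.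
  by rewrite S_eq in S_neq.
rewrite big1 // => S S_state; case: ifP => // S_comp.
by case/andP: (compatible_tait S_state S_comp x_nfree); rewrite x_ntait.
Qed.

Section TaitSign.
Variable x : labeling.
Hypothesis x_tait : tait_labeling x.

Lemma tait_even_subgraph : [ffun d => (d \in M) || x d] \in even_subgraphs alpha sigma.
Proof.
case/tait_labelingP: x_tait => x0 xa x_split; rewrite inE; apply/andP; split.
  apply/inv_labelingsP => d; rewrite !ffunE matching_alpha.
  by case dM: (d \in M); rewrite //= xa ?dM.
apply/eqP/ffunP => d; rewrite !ffunE; have := matching_vertex d.
case dM: (d \in M); case sM: (sigma d \in M); case s2M: (sigma (sigma d) \in M) => //= _.
- by move: (x_split _ dM); case: (x (sigma d)); case: (x (sigma (sigma d))).
- by move: (x_split _ sM); rewrite sigma3; case: (x d); case: (x (sigma (sigma d))).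
- by move: (x_split _ s2M); rewrite !sigma3; case: (x d); case: (x (sigma d)).
Qed.

Section Region.
Variable c : labeling.
Hypotheses (c_face : c \in face_labelings alpha sigma)
           (c_bound : region_boundary alpha c = [ffun d => (d \in M) || x d]).

Let c_vertex d : c (sigma (alpha d)) = c d.
Proof. by move/inv_labelingsP: c_face; apply. Qed.

Let c_edge d : c d (+) c (alpha d) = (d \in M) || x d.
Proof. by rewrite -[RHS](ffunE (fun d => (d \in M) || x d)) -c_bound ffunE. Qed.

Let g m := c (sigma m) (+) x (sigma m).

Lemma tait_state_jumps : tait_state x = [set m in M | g m != g (alpha m)].
Proof.
case/tait_labelingP: x_tait => _ _ x_split.
apply/setP => m; rewrite !inE; case mM: (m \in M) => //=.
have aM : alpha m \in M by rewrite matching_alpha.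
have e1 : c (sigma m) = c (alpha m) by rewrite -[in LHS](alphaK m) c_vertex.
have := c_edge m; have := x_split _ aM; rewrite /g mM e1 c_vertex /=.
by case: (c m); case: (c (alpha m)); case: (x (sigma m)); case: (x (sigma (alpha m)));
  case: (x (sigma (sigma (alpha m)))).
Qed.

Let xfalse_dart m := if x (sigma m) then sigma (sigma m) else sigma m.
Let matched_dart d := if sigma d \in M then sigma d else sigma (sigma d).

Let xfalse_dartK : {in M, cancel xfalse_dart matched_dart}.
Proof.
move=> m mM; case/andP: (matching_sigma mM) => m1 m2; rewrite /xfalse_dart /matched_dart.
by case: (x (sigma m)); rewrite ?sigma3 ?mM ?(negbTE m2).
Qed.

Let xfalse_darts : [set d | (d \notin M) && ~~ x d] = xfalse_dart @: M.
Proof.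
case/tait_labelingP: x_tait => _ _ x_split.
apply/setP => d; rewrite inE; apply/andP/imsetP => [[dM xd] | [m mM ->]].
  case/orP: (unmatched_vertex dM) => [sM | s2M];
    [exists (sigma d) | exists (sigma (sigma d))] => //.
    by move: (x_split _ sM); rewrite /xfalse_dart sigma3 (negbTE xd); case: (x _).
  by rewrite /xfalse_dart sigma3 (negbTE xd).
case/andP: (matching_sigma mM) => m1 m2; have := x_split _ mM; rewrite /xfalse_dart.
by case xs: (x (sigma m)); case: (x (sigma (sigma m))) => //= _; rewrite ?xs.
Qed.

Let g_xfalse_dart m : m \in M -> g m = c (xfalse_dart m).
Proof.
move=> mM; rewrite /g /xfalse_dart; case: ifP => [xs | _]; last exact: addbF.
have e : c (sigma (sigma m)) = c (alpha (sigma m)).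
  by rewrite -[in LHS](alphaK (sigma m)) c_vertex.
by have := c_edge (sigma m); rewrite xs orbT e; case: (c (sigma m)); case: (c (alpha _)).
Qed.

(* The crossings are the matching edges across which [g] jumps; summing [g] over [M]
   sums [c] over the darts labelled [false], which pair up along edges. *)
Lemma tait_state_even : ~~ odd (#|tait_state x| %/ 2).
Proof.
case/tait_labelingP: x_tait => _ xa _.
rewrite tait_state_jumps (odd_half_card_jumps alphaK alpha_neq) => [|d].
  2: by rewrite matching_alpha.
under eq_bigr => m mM do rewrite g_xfalse_dart //.
rewrite -(big_imset (fun d => nat_of_bool (c d)) (can_in_inj xfalse_dartK)) -xfalse_darts /=.
apply: (even_sum_involution alphaK alpha_neq) => d; rewrite !inE => /andP [dM xd].
  by rewrite matching_alpha dM xa.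
by have := c_edge d; rewrite (negbTE dM) (negbTE xd); case: (c d); case: (c (alpha d)).
Qed.

End Region.

Lemma tait_state_sign :
  map_connected alpha sigma -> planar_map alpha sigma -> state_sign (tait_state x) = 1%R.
Proof.
move=> connected planar.
have /imsetP [c c_face c_bound] :=
  subsetP (even_subgraph_region_boundary alphaK sigma3 connected planar) _ tait_even_subgraph.
by rewrite /state_sign -signr_odd (negbTE (tait_state_even c_face (esym c_bound))).
Qed.

End TaitSign.

Lemma bracket2_at1 : map_connected alpha sigma -> planar_map alpha sigma ->
  bracket2 alpha sigma M (1 : int) = (#|[set x | tait_labeling x]|)%:R%R.
Proof.
move=> connected planar; rewrite /bracket2 invr1 (_ : (1 + 1)%R = 2%:R%R) //.
under eq_bigr => S S_state.
  rewrite -natrX card_compatible // mulr_natr -sumr_const big_mkcond /=.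
  under eq_bigr do rewrite inE.
  over.
rewrite exchange_big /=; under eq_bigr do rewrite sum_sign_compatible.
rewrite -big_mkcond /= -sumr_const.
by apply: eq_big => [x | x x_tait]; rewrite ?inE ?tait_state_sign.
Qed.

End Matching.

Definition color0 : 'I_3 := @Ordinal 3 0 isT.
Definition color1 : 'I_3 := @Ordinal 3 1 isT.
Definition color2 : 'I_3 := @Ordinal 3 2 isT.

Lemma distinct3_color0 (a b e : 'I_3) : a != b -> b != e -> a != e ->
  ((a == color0) + (b == color0) + (e == color0) = 1)%N.
Proof. by case: a => [[|[|[|//]]] ?]; case: b => [[|[|[|//]]] ?]; case: e => [[|[|[|//]]] ?]. Qed.

Lemma distinct3_color2 (a b e : 'I_3) : a != b -> b != e -> a != e -> a == color0 ->
  (b == color2) != (e == color2).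
Proof. by case: a => [[|[|[|//]]] ?]; case: b => [[|[|[|//]]] ?]; case: e => [[|[|[|//]]] ?]. Qed.

Lemma nonzero_color (a : 'I_3) : a != color0 -> (if a == color2 then color2 else color1) = a.
Proof. by case: a => [[|[|[|//]]] ?] //= _; apply: val_inj. Qed.

Section TaitColorings.
Variables (D : finType) (alpha sigma : D -> D).
Hypotheses (sigma3 : forall d, sigma (sigma (sigma d)) = d) (sigma_neq : forall d, sigma d != d).
Local Notation labeling := {ffun D -> bool}.
Local Notation coloring := {ffun D -> 'I_3}.

Definition color0_class (c : coloring) : {set D} := [set d | c d == color0].

Definition tait_encode (M : {set D}) (x : labeling) : coloring :=
  [ffun d => if d \in M then color0 else if x d then color2 else color1].

Definition tait_decode (c : coloring) : labeling := [ffun d => c d == color2].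

Lemma tait_color0_perfect c :
  tait_coloring alpha sigma c -> perfect_matching alpha sigma (color0_class c).
Proof.
move=> /forallP c_tait; apply/andP; split; apply/forallP => d;
  have /andP [/eqP c_alpha /and3P [n1 n2 n3]] := c_tait d.
  by rewrite !inE c_alpha.
by rewrite card_set3I ?uniq_vertex // !inE distinct3_color0.
Qed.

Section FixedMatching.
Variable M : {set D}.
Hypothesis M_perfect : perfect_matching alpha sigma M.

Lemma color0_class_encode x : color0_class (tait_encode M x) = M.
Proof. by apply/setP => d; rewrite !inE ffunE; case: (d \in M); case: (x d). Qed.

Lemma tait_encode_coloring x :
  tait_labeling alpha sigma M x -> tait_coloring alpha sigma (tait_encode M x).
Proof.
case/tait_labelingP=> x0 xa x_split; apply/forallP => d.
rewrite !ffunE (matching_alpha M_perfect); apply/andP; split.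
  by case dM: (d \in M); rewrite // xa ?dM.
have := matching_vertex sigma3 sigma_neq M_perfect d.
case dM: (d \in M); case sM: (sigma d \in M); case s2M: (sigma (sigma d) \in M) => //= _.
- by move: (x_split _ dM); case: (x (sigma d)); case: (x (sigma (sigma d))).
- by move: (x_split _ sM); rewrite sigma3; case: (x d); case: (x (sigma (sigma d))).
- by move: (x_split _ s2M); rewrite !sigma3; case: (x d); case: (x (sigma d)).
Qed.

Lemma tait_encodeK x : tait_labeling alpha sigma M x -> tait_decode (tait_encode M x) = x.
Proof.
case/tait_labelingP=> x0 _ _; apply/ffunP => d; rewrite !ffunE.
by case dM: (d \in M); [rewrite x0 | case: (x d)].
Qed.

Lemma tait_decode_labeling c : tait_coloring alpha sigma c -> color0_class c = M ->
  tait_labeling alpha sigma M (tait_decode c).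
Proof.
move=> /forallP c_tait <-; apply/tait_labelingP; split=> d; rewrite inE => dM;
  have /andP [/eqP c_alpha /and3P [n1 n2 n3]] := c_tait d; rewrite !ffunE.
- by rewrite (eqP dM).
- by rewrite c_alpha.
- exact: distinct3_color2 n1 n2 n3 dM.
Qed.

Lemma tait_decodeK c : color0_class c = M -> tait_encode M (tait_decode c) = c.
Proof.
move=> <-; apply/ffunP => d; rewrite !ffunE inE.
by case: eqP => [-> // | /eqP /nonzero_color].
Qed.

Lemma card_tait_colorings_class :
  #|[set c | tait_coloring alpha sigma c && (color0_class c == M)]| =
  #|[set x | tait_labeling alpha sigma M x]|.
Proof.
rewrite -(card_in_imset (f := tait_encode M)) => [|x y]; last first.
  by rewrite !inE => x_tait y_tait xy; rewrite -(tait_encodeK x_tait) xy tait_encodeK.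
congr #|pred_of_set _|; apply/setP => c; rewrite inE; apply/andP/imsetP.
  case=> c_tait /eqP cM; exists (tait_decode c); last by rewrite tait_decodeK.
  by rewrite inE tait_decode_labeling.
by case=> x /[!inE] x_tait ->; rewrite tait_encode_coloring // color0_class_encode.
Qed.

End FixedMatching.

Lemma sum_tait_labelings :
  (\sum_(M : {set D} | perfect_matching alpha sigma M)
     #|[set x | tait_labeling alpha sigma M x]|)%N = n_tait alpha sigma.
Proof.
rewrite /n_tait -sum1dep_card (partition_big color0_class (perfect_matching alpha sigma)) /=.
  by apply: eq_bigr => M M_perfect; rewrite sum1dep_card card_tait_colorings_class.
exact: tait_color0_perfect.
Qed.

End TaitColorings.

Local Open Scope ring_scope.

Theorem theorem1p6 (D : finType) (alpha sigma : D -> D) :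
  trivalent_map alpha sigma ->
  map_connected alpha sigma ->
  planar_map alpha sigma ->
  T_poly alpha sigma (1 : int) = (n_tait alpha sigma)%:Z.
Proof.
move=> [alphaK [alpha_neq [sigma3 sigma_neq]]] connected planar.
rewrite /T_poly -(sum_tait_labelings _ sigma3 sigma_neq) -natz natr_sum.
by apply: eq_bigr => M M_perfect; rewrite bracket2_at1.
Qed.
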